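(* Let $G$ be a finite group of order $n$, $k$ a positive integer, $a_1,\dots,a_k,b_1,\dots,b_k$ independent uniformly random elements of $G$, and for $(i,j)\in V=[k]\times[k]$ and $x\in G$ let $I_{(i,j)}(x)$ be the indicator of the event $\{x=a_ib_j \text{ or } x=b_ja_i\}$. Let $\Gamma=(V,E)$ be the graph with $(i,j)\sim(\ell,m)$ iff ($i=\ell$ and $j\ne m$) or ($i\ne \ell$ and $j=m$). Let $x,y\in G$, $v\in V$ and $u\in V$ with $u\sim v$. Then $$\mathbb{E}[I_v(x)I_u(y)]=\frac{4}{n^2}\Big(1-\frac{|C(x)|+|C(y)|}{2n}+\frac{|C(x)\cap C(y)|}{4n}\Big).$$
   Context: $[k]=\{1,\dots,k\}$; $C(x)=\{g\in G: gx=xg\}$ is the centralizer of $x$. *)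

From mathcomp Require Import all_boot all_order all_algebra all_fingroup.
Set Implicit Arguments. Unset Strict Implicit. Unset Printing Implicit Defensive.
Import GRing.Theory Num.Theory.

Definition Vtx (k : nat) : finType := ('I_k * 'I_k)%type.

Definition adjG (k : nat) (v u : Vtx k) : bool :=
  ((v.1 == u.1) && (v.2 != u.2)) || ((v.1 != u.1) && (v.2 == u.2)).

Definition Omega (gT : finGroupType) (k : nat) : finType :=
  ({ffun 'I_k -> gT} * {ffun 'I_k -> gT})%type.

Definition Ind (gT : finGroupType) (k : nat) (v : Vtx k) (x : gT)
    (w : Omega gT k) : rat :=
  ((x == (w.1 v.1 * w.2 v.2)%g) || (x == (w.2 v.2 * w.1 v.1)%g))%:R.

(* Expectation under the uniform (product of independent uniforms) measure. *)
Definition Expect (gT : finGroupType) (k : nat) (f : Omega gT k -> rat) : rat :=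
  (\sum_(w : Omega gT k) f w) / #|Omega gT k|%:R.

From mathcomp Require Import all_boot all_order all_algebra all_fingroup ring.
Import GRing.Theory Num.Theory.
Local Open Scope ring_scope.

(* Sum the product of indicators over all samples: the coordinates that do not
   occur contribute a factor n^(2k-3). For a fixed shared factor a, the b with
   x in {ab, ba} form the set {a^-1 x, x a^-1}, of size 2 - [a in C(x)]; summing
   (2 - [a in C(x)]) (2 - [a in C(y)]) over a gives
   4n - 2|C(x)| - 2|C(y)| + |C(x) :&: C(y)|, and dividing by n^(2k) concludes. *)

Section FfunSums.

Context {I T : finType}.

Lemma card_ffun_agree (J : {set I}) (g : I -> T) :
  #|[set f : {ffun I -> T} | [forall i in J, f i == g i]]| = (#|T| ^ #|~: J|)%N.
Proof.
pose F i : pred T := if i \in J then pred1 (g i) else predT.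
rewrite (@eq_card _ _ (family F)); last first.
  move=> f; rewrite !inE; apply/forall_inP/familyP => [fJ i | fF i iJ].
    by rewrite /F; case: ifP => [/fJ|].
  by have := fF i; rewrite /F iJ.
rewrite card_family foldrE big_image /= -prod_nat_const [RHS]big_mkcond /=.
apply: eq_bigr => i _; rewrite /F inE.
by case: (i \in J); rewrite /= ?card1 // cardT.
Qed.

Lemma sum_ffun_coord {V : nmodType} (j : I) (G : T -> V) :
  \sum_(f : {ffun I -> T}) G (f j) = (\sum_a G a) *+ (#|T| ^ #|I|.-1).
Proof.
rewrite (partition_big (fun f : {ffun I -> T} => f j) predT) // -sumrMnl.
apply: eq_bigr => a _; rewrite (eq_bigr (fun _ => G a)); last by move=> f /eqP ->.
rewrite sumr_const -(cardsC1 j) -(card_ffun_agree [set j] (fun=> a)).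
congr (_ *+ _); apply: eq_card => f; rewrite [in LHS]unfold_in /= inE.
by apply/idP/forall_inP => [/eqP fj i /set1P -> | /(_ j (set11 j))]; rewrite ?fj.
Qed.

Lemma sum_ffun_coord2 {V : nmodType} {j m : I} (G : T -> T -> V) : j != m ->
  \sum_(f : {ffun I -> T}) G (f j) (f m) = (\sum_a \sum_b G a b) *+ (#|T| ^ (#|I| - 2)).
Proof.
move=> neq_jm.
rewrite (partition_big (fun f : {ffun I -> T} => (f j, f m)) predT) // pair_big -sumrMnl.
apply: eq_bigr => -[a b] _; rewrite (eq_bigr (fun _ => G a b)); last by move=> f /eqP [-> ->].
have card_jm : #|~: [set j; m]| = (#|I| - 2)%N by rewrite -(cardsC [set j; m]) cards2 neq_jm addKn.
rewrite sumr_const -card_jm -(card_ffun_agree [set j; m] (fun i => if i == j then a else b)).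
congr (_ *+ _); apply: eq_card => f; rewrite [in LHS]unfold_in /= inE.
apply/andP/forall_inP => [[/eqP fj /eqP fm] i /set2P [] -> | fjm].
- by rewrite eqxx fj.
- by rewrite ifN_eqC // fm.
by move: (fjm j (set21 j m)) (fjm m (set22 j m)); rewrite eqxx ifN_eqC // => -> ->.
Qed.

End FfunSums.

Lemma sum_indicator (R : pzSemiRingType) (T : finType) (A : {pred T}) :
  \sum_(t : T) (t \in A)%:R = #|A|%:R :> R.
Proof.
rewrite -sum1_card natr_sum [RHS]big_mkcond.
by apply: eq_bigr => t _; case: (t \in A).
Qed.

Section EitherProduct.

Context {gT : finGroupType}.

Definition either_prod (x a b : gT) : bool := (x == a * b)%g || (x == b * a)%g.

Lemma either_prodC (x a b : gT) : either_prod x a b = either_prod x b a.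
Proof. exact: orbC. Qed.

Lemma either_prod_set (x a : gT) :
  [set b | either_prod x a b] = [set a^-1 * x; x * a^-1]%g.
Proof.
apply/setP => b; rewrite !inE /either_prod.
by congr (_ || _); apply/eqP/eqP => ->; rewrite ?mulKg ?mulKVg ?mulgK ?mulgKV.
Qed.

Lemma card_either_prod (x a : gT) :
  #|[set b | either_prod x a b]| = (a \notin 'C[x]%g).+1.
Proof.
rewrite either_prod_set cards2 -groupV; congr (~~ _).+1.
exact: sameP eqP cent1P.
Qed.

Lemma sum_either_prod (R : pzRingType) (x a : gT) :
  \sum_b (either_prod x a b)%:R = 2 - (a \in 'C[x]%g)%:R :> R.
Proof.
rewrite (eq_bigr (fun b => (b \in [set b | either_prod x a b])%:R)); last by move=> b; rewrite inE.
rewrite sum_indicator card_either_prod.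
by case: (a \in _); rewrite /= ?subr0 // addrK.
Qed.

(* The number of triples (a, b, c) with x in {ab, ba} and y in {ac, ca}. *)
Definition shared_count (R : pzRingType) (x y : gT) : R :=
  4 * #|gT|%:R - 2 * #|'C[x]%g|%:R - 2 * #|'C[y]%g|%:R + #|('C[x] :&: 'C[y])%g|%:R.

Lemma sum_centralizer_weights (R : comPzRingType) (x y : gT) :
  \sum_a (2 - (a \in 'C[x]%g)%:R) * (2 - (a \in 'C[y]%g)%:R) = shared_count R x y.
Proof.
rewrite /shared_count (eq_bigr (fun a => 4 - 2 * (a \in 'C[x]%g)%:R - 2 * (a \in 'C[y]%g)%:R
                             + (a \in ('C[x] :&: 'C[y])%g)%:R)); last first.
  by move=> a _; rewrite in_setI; case: (a \in _); case: (a \in _) => /=; ring.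
by rewrite big_split !sumrB /= -!mulr_sumr !sum_indicator sumr_const [4 * _]mulr_natr.
Qed.

Lemma sum_either_prod_shared_left {R : comPzRingType} {I : finType} (i : I) {j m : I}
    (x y : gT) : j != m ->
  \sum_(f : {ffun I -> gT}) \sum_(g : {ffun I -> gT})
     (either_prod x (f i) (g j))%:R * (either_prod y (f i) (g m))%:R =
  shared_count R x y *+ (#|gT| ^ #|I|.-1 * #|gT| ^ (#|I| - 2)).
Proof.
move=> neq_jm.
under eq_bigr => f _ do rewrite
  (sum_ffun_coord2 (fun b c => (either_prod x (f i) b)%:R * (either_prod y (f i) c)%:R) neq_jm)
  -big_distrlr /= !sum_either_prod.
rewrite sumrMnl.
rewrite (sum_ffun_coord i (fun a => (2 - (a \in 'C[x]%g)%:R) * (2 - (a \in 'C[y]%g)%:R))).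
by rewrite sum_centralizer_weights mulrnA.
Qed.

Lemma sum_either_prod_shared_right {R : comPzRingType} {I : finType} {i l : I} (j : I)
    (x y : gT) : i != l ->
  \sum_(f : {ffun I -> gT}) \sum_(g : {ffun I -> gT})
     (either_prod x (f i) (g j))%:R * (either_prod y (f l) (g j))%:R =
  shared_count R x y *+ (#|gT| ^ #|I|.-1 * #|gT| ^ (#|I| - 2)).
Proof.
move=> neq_il; rewrite exchange_big /=.
under eq_bigr => g _ do under eq_bigr => f _ do rewrite either_prodC (either_prodC y).
exact: sum_either_prod_shared_left.
Qed.

End EitherProduct.

Lemma sum_pair (V : nmodType) (T1 T2 : finType) (F : T1 * T2 -> V) :
  \sum_(p : T1 * T2) F p = \sum_(a : T1) \sum_(b : T2) F (a, b).
Proof. by rewrite pair_bigA; apply: eq_bigr => -[]. Qed.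

Lemma normalize_shared_count (R : numFieldType) (n k : nat) (A B C : R) :
  (0 < n)%N -> (1 < k)%N ->
  (4 * n%:R - 2 * A - 2 * B + C) *+ (n ^ k.-1 * n ^ (k - 2)) / (n ^ k * n ^ k)%:R =
  4 / n%:R ^+ 2 * (1 - (A + B) / (2 * n%:R) + C / (4 * n%:R)).
Proof.
case: k => [|[|k]] // n_gt0 _.
have n_neq0 : n%:R != 0 :> R by rewrite pnatr_eq0 -lt0n.
rewrite -mulr_natr !natrM !natrX /= !subSS subn0.
rewrite exprS; move: (n%:R ^+ k) (expf_neq0 k n_neq0) => nk nk_neq0.
by field; rewrite n_neq0 nk_neq0.
Qed.

Theorem proposition4p6 (gT : finGroupType) (k : nat) (hk : (0 < k)%N)
    (x y : gT) (v u : Vtx k) (huv : adjG u v) :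
  Expect (fun w => Ind v x w * Ind u y w) =
  4 / (#|gT|%:R ^+ 2) *
    (1 - (#|('C[x])%g|%:R + #|('C[y])%g|%:R) / (2 * #|gT|%:R)
       + #|('C[x] :&: 'C[y])%g|%:R / (4 * #|gT|%:R)) :> rat.
Proof.
have n_gt0 : (0 < #|gT|)%N by apply/card_gt0P; exists 1%g.
have k_gt1 (j m : 'I_k) : j != m -> (1 < k)%N.
  by move=> neq_jm; have := max_card [set j; m]; rewrite cards2 neq_jm card_ord.
rewrite /Expect sum_pair card_prod !card_ffun card_ord.
case: v u huv => [i j] [l m]; rewrite /adjG /=.
case/orP => [/andP[/eqP-> neq_mj] | /andP[neq_li /eqP->]].
- rewrite eq_sym in neq_mj; rewrite (sum_either_prod_shared_left i x y neq_mj).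
  by rewrite /shared_count card_ord normalize_shared_count // (k_gt1 _ _ neq_mj).
- rewrite eq_sym in neq_li; rewrite (sum_either_prod_shared_right j x y neq_li).
  by rewrite /shared_count card_ord normalize_shared_count // (k_gt1 _ _ neq_li).
Qed.
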